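(* Let $\mu$ be the uniform probability measure on $\{-1,1\}^n$ and let $\nu=e^f d\mu$ be a probability measure on $\{-1,1\}^n$ (with $f:\{-1,1\}^n\to\mathbb{R}$). Let $$\mathcal{I}(\nu)=\int I\big(\nabla\Lambda_\mu(\nabla f(x))\big)\,d\nu(x),$$ where $\nabla f$ is the discrete gradient of $f$. Then $$\mathcal{I}(\nu)\le H(\nu|\mu)+\kappa\int\sup_{y\in\{-1,1\}^n}\langle\nabla f(y),x\rangle\,d\mu(x),$$ where $\kappa$ is a universal constant.
   Context: Discrete gradient: $\nabla f(x)=(\partial_1f(x),\dots,\partial_nf(x))$ with $\partial_if(x)=\frac12(f(x_+)-f(x_-))$, where $x_\pm$ is $x$ with $i$-th coordinate replaced by $\pm1$. $\Lambda_\mu(\xi)=\log\int e^{\langle\xi,x\rangle}d\mu(x)=\sum_i\log\cosh\xi_i$, so $\nabla\Lambda_\mu(\xi)=(\tanh\xi_1,\dots,\tanh\xi_n)$. $I(x)=\sum_{i=1}^n\big(\frac{1+x_i}{2}\log(1+x_i)+\frac{1-x_i}{2}\log(1-x_i)\big)$ on $[-1,1]^n$. $H(\nu|\mu)$ is the relative entropy. *)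

From mathcomp Require Import all_boot all_order all_algebra.
From mathcomp Require Import all_classical all_reals.
From mathcomp Require Import all_analysis.
Set Implicit Arguments. Unset Strict Implicit. Unset Printing Implicit Defensive.
Import Order.TTheory GRing.Theory Num.Theory.
Local Open Scope ring_scope.

(* The discrete cube {-1,1}^n, a point encoded by its sign pattern. *)
Definition cube (n : nat) := {ffun 'I_n -> bool}.

Section Cube.
Variable R : realType.
Variable n : nat.

Definition coord (x : cube n) (i : 'I_n) : R := if x i then 1 else -1.

Definition inner (u : 'I_n -> R) (x : cube n) : R := \sum_i u i * coord x i.

Definition setc (x : cube n) (i : 'I_n) (b : bool) : cube n :=
  [ffun j => if j == i then b else x j].

Definition dpart (f : cube n -> R) (i : 'I_n) (x : cube n) : R :=
  (f (setc x i true) - f (setc x i false)) / 2.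
Definition dgrad (f : cube n -> R) (x : cube n) : 'I_n -> R :=
  fun i => dpart f i x.

Definition mu_int (g : cube n -> R) : R := (2 ^+ n)^-1 * \sum_x g x.

Definition nu_int (f : cube n -> R) (g : cube n -> R) : R :=
  mu_int (fun x => expR (f x) * g x).

(* relative entropy H(nu|mu) = int log(dnu/dmu) dnu *)
Definition relent (f : cube n -> R) : R := nu_int f f.

Definition tanh (t : R) : R := (expR t - expR (- t)) / (expR t + expR (- t)).

Definition gradLambda (xi : 'I_n -> R) : 'I_n -> R := fun i => tanh (xi i).

Definition I1 (t : R) : R := (1 + t) / 2 * ln (1 + t) + (1 - t) / 2 * ln (1 - t).
Definition Ient (u : 'I_n -> R) : R := \sum_i I1 (u i).

Definition calI (f : cube n -> R) : R :=
  nu_int f (fun x => Ient (gradLambda (dgrad f x))).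

Definition supcube (g : cube n -> R) : R :=
  \big[Num.max/g [ffun => true]]_(y : cube n) g y.

Definition gauss_width (f : cube n -> R) : R :=
  mu_int (fun x => supcube (fun y => inner (dgrad f y) x)).

End Cube.

From Pilot Require Import Defs.
From mathcomp Require Import all_boot all_order all_algebra.
From mathcomp Require Import all_classical all_reals.
From mathcomp Require Import all_analysis.
From mathcomp Require Import ring lra.
Import Order.TTheory GRing.Theory Num.Theory.
Set Implicit Arguments. Unset Strict Implicit. Unset Printing Implicit Defensive.
Local Open Scope ring_scope.

(* Since I(tanh s) = s tanh s - log cosh s, and since pairing each x with its
   flip in coordinate i gives  int d_i f(x) (x_i - tanh d_i f(x)) dnu = 0,
     I(nu) = int (<grad f(x), x> - Lambda_mu(grad f(x))) dnu <= int G dnu,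
   where G(x) = sup_y (<grad f(y), x> - Lambda_mu(grad f(y))).  The
   Donsker-Varadhan inequality bounds int G dnu by H(nu|mu) + log int e^G dmu,
   and  log int e^G dmu <= 2 int sup_y <grad f(y), x> dmu(x)  holds for every
   finite family of vectors, even with additive offsets, by induction on n:
   conditioning on the first coordinate and Jensen's inequality for the convex
   map (a, b) |-> log ((e^a + e^b) / 2) reduce the induction step to a
   two-point inequality.  Hence kappa = 2. *)


Section CubeIntegral.
Variable R : realType.
Implicit Types (n : nat).

Lemma le_supcube n (g : cube n -> R) y : g y <= supcube g.
Proof.
rewrite /supcube; have : y \in index_enum (cube n) by rewrite mem_index_enum.
elim: (index_enum _) => [|z s IH] //=.
rewrite big_cons in_cons => /orP [/eqP -> | /IH h].
- by rewrite le_max lexx.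
- by rewrite le_max h orbT.
Qed.

Lemma supcube_attained n (g : cube n -> R) : exists y, supcube g = g y.
Proof.
rewrite /supcube; elim: (index_enum _) => [|z s [y IH]] /=.
  by rewrite big_nil; exists [ffun => true].
rewrite big_cons IH /Num.max /Order.max; case: ifP => _.
  by exists y.
by exists z.
Qed.

Lemma supcube_le n (g : cube n -> R) C : (forall y, g y <= C) -> supcube g <= C.
Proof. by move=> h; have [y ->] := supcube_attained g. Qed.

Lemma card_cube n : #|cube n| = (2 ^ n)%N.
Proof. by rewrite card_ffun card_bool card_ord. Qed.

Lemma eq_mu_int n (F G : cube n -> R) : F =1 G -> mu_int F = mu_int G.
Proof. by move=> eqFG; rewrite /mu_int (eq_bigr _ (fun x _ => eqFG x)). Qed.

Lemma ler_mu_int n (F G : cube n -> R) : (forall x, F x <= G x) -> mu_int F <= mu_int G.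
Proof.
by move=> leFG; rewrite /mu_int ler_wpM2l ?ler_sum // invr_ge0 exprn_ge0.
Qed.

Lemma mu_int_cst n (C : R) : mu_int (fun _ : cube n => C) = C.
Proof.
by rewrite /mu_int sumr_const card_cube -[C *+ _]mulr_natl natrX mulrA mulVf ?mul1r.
Qed.

Lemma mu_intD n (F G : cube n -> R) :
  mu_int (fun x => F x + G x) = mu_int F + mu_int G.
Proof. by rewrite /mu_int big_split mulrDr. Qed.

Lemma mu_intZ n (F : cube n -> R) k : mu_int (fun x => k * F x) = k * mu_int F.
Proof. by rewrite /mu_int -mulr_sumr mulrCA. Qed.

Lemma mu_intZr n (F : cube n -> R) k : mu_int (fun x => F x * k) = mu_int F * k.
Proof. by rewrite /mu_int -mulr_suml mulrA. Qed.

Lemma mu_int_gt0 n (F : cube n -> R) : (forall x, 0 < F x) -> 0 < mu_int F.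
Proof.
move=> F_gt0; rewrite /mu_int mulr_gt0 ?invr_gt0 ?exprn_gt0 //.
rewrite (bigD1 [ffun => true]) //= ltr_wpDr ?F_gt0 //.
by rewrite sumr_ge0 // => x _; rewrite ltW.
Qed.

Definition cube_cons n (b : bool) (x : cube n) : cube n.+1 :=
  [ffun i => if unlift ord0 i is Some j then x j else b].

Lemma big_cube_cons n (F : cube n.+1 -> R) :
  \sum_(x : cube n.+1) F x =
    \sum_(x : cube n) F (cube_cons true x) + \sum_(x : cube n) F (cube_cons false x).
Proof.
rewrite (reindex (fun p : bool * cube n => cube_cons p.1 p.2)) /=.
  by rewrite -(pair_big predT predT (fun b x => F (cube_cons b x))) big_bool.
exists (fun x : cube n.+1 => (x ord0, [ffun j => x (lift ord0 j)])) => [[b x]|x] _ /=.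
  rewrite !ffunE unlift_none; congr (_, _); apply/ffunP => j.
  by rewrite !ffunE liftK.
apply/ffunP => i; rewrite !ffunE; case: unliftP => [j ->|->] //.
by rewrite ffunE.
Qed.

Lemma mu_int_cons n (F : cube n.+1 -> R) :
  mu_int F = mu_int (fun x => (F (cube_cons true x) + F (cube_cons false x)) / 2).
Proof.
by rewrite /mu_int big_cube_cons -big_split /= -mulr_suml exprS invfM; ring.
Qed.

Lemma inner_cons n (u : 'I_n.+1 -> R) b (x : cube n) :
  inner u (cube_cons b x) =
    (if b then u ord0 else - u ord0) + inner (fun j : 'I_n => u (lift ord0 j)) x.
Proof.
rewrite /inner big_ord_recl /Defs.coord !ffunE unlift_none; congr (_ + _).
  by case: b; rewrite ?mulr1 ?mulrN1.
by apply: eq_bigr => j _; rewrite ffunE liftK.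
Qed.

End CubeIntegral.

Section LogMeanExp.
Variable R : realType.

Definition logmeanexp (a b : R) : R := ln ((expR a + expR b) / 2).
Definition lncosh (t : R) : R := logmeanexp t (- t).
Definition logLaplace n (u : 'I_n -> R) : R := \sum_i lncosh (u i).

Lemma logmeanexp_tangent (a b a' b' : R) :
  logmeanexp a b + expR a / (expR a + expR b) * (a' - a)
    + expR b / (expR a + expR b) * (b' - b) <= logmeanexp a' b'.
Proof.
set ea := expR a; set eb := expR b; set S := ea + eb.
have ea_gt0 : 0 < ea by rewrite expR_gt0.
have eb_gt0 : 0 < eb by rewrite expR_gt0.
have S_gt0 : 0 < S by rewrite addr_gt0.
set m := ea / S * (a' - a) + eb / S * (b' - b).
have Sm : ea * (a' - a) + eb * (b' - b) = S * m by rewrite /m; field; rewrite gt_eqF.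
(* e^{a'} >= e^a e^m (1 + (a' - a - m)); since m is the weighted mean, the corrections cancel. *)
have Sm_eq : ea * expR m * (1 + (a' - a - m)) + eb * expR m * (1 + (b' - b - m)) = S * expR m.
  have -> : ea * expR m * (1 + (a' - a - m)) + eb * expR m * (1 + (b' - b - m)) =
    S * expR m + expR m * (ea * (a' - a) + eb * (b' - b) - S * m) by rewrite /S; ring.
  by rewrite Sm subrr mulr0 addr0.
have Sm_le : S * expR m <= expR a' + expR b'.
  have ea' : expR a' = ea * expR m * expR (a' - a - m) by rewrite -!expRD; congr expR; ring.
  have eb' : expR b' = eb * expR m * expR (b' - b - m) by rewrite -!expRD; congr expR; ring.
  by rewrite -Sm_eq ea' eb'; apply: lerD; rewrite ler_wpM2l ?expR_ge1Dx // ltW ?mulr_gt0 ?expR_gt0.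
rewrite -addrA -/m /logmeanexp -[m in X in X <= _]expRK -lnM ?posrE ?divr_gt0 ?expR_gt0 //.
by rewrite ler_ln ?posrE ?mulr_gt0 ?divr_gt0 ?addr_gt0 ?expR_gt0 // mulrAC ler_pM2r.
Qed.

Lemma logmeanexp_jensen n (F G : cube n -> R) :
  logmeanexp (mu_int F) (mu_int G) <= mu_int (fun x => logmeanexp (F x) (G x)).
Proof.
set a := mu_int F; set b := mu_int G.
apply: le_trans _ (ler_mu_int (fun x => logmeanexp_tangent a b (F x) (G x))).
by rewrite !mu_intD !mu_intZ !mu_intD !mu_int_cst -/a -/b !subrr !mulr0 !addr0.
Qed.

End LogMeanExp.

Section TwoPoint.
Variable R : realType.

(* On {0 <= p, q <= M, p q <= M^2 e} a nonnegative linear form is largest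
   at (M, M e) or (M e, M). *)
Lemma linear_pair_le (p q M e a c : R) :
  0 < M -> 0 <= p -> p <= M -> 0 <= q -> q <= M -> p * q <= M * M * e ->
  0 <= a -> 0 <= c -> a + c * e <= 1 -> a * e + c <= 1 -> p * a + q * c <= M.
Proof.
move=> M_gt0 p_ge0 p_leM q_ge0 q_leM pq_le a_ge0 c_ge0 ace_le aec_le.
have pq_sum : p + q <= M * (1 + e).
  rewrite -(ler_pM2l M_gt0).
  have : 0 <= (M - p) * (M - q) by apply: mulr_ge0; lra.
  nra.
have [le_ca|lt_ac] := leP c a.
- have k1 : 0 <= (a - c) * (M - p) by apply: mulr_ge0; lra.
  have k2 : 0 <= c * (M * (1 + e) - p - q) by apply: mulr_ge0; lra.
  have k3 : 0 <= M * (1 - a - c * e) by apply: mulr_ge0; lra.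
  nra.
- have k1 : 0 <= (c - a) * (M - q) by apply: mulr_ge0; lra.
  have k2 : 0 <= a * (M * (1 + e) - p - q) by apply: mulr_ge0; lra.
  have k3 : 0 <= M * (1 - a * e - c) by apply: mulr_ge0; lra.
  nra.
Qed.

Lemma tilt_pair_le (p q M A B : R) :
  0 < M -> 0 <= p -> p <= M -> 0 <= q -> q <= M -> 0 < A -> 0 < B ->
  p * q * A <= M * M * B -> p * q * B <= M * M * A ->
  p * (A / (A + 1)) + q / (B + 1) <= M.
Proof.
move=> M_gt0 p_ge0 p_leM q_ge0 q_leM A_gt0 B_gt0 le_AB le_BA.
have A1_gt0 : 0 < A + 1 by lra.
have B1_gt0 : 0 < B + 1 by lra.
have [leBA|ltAB] := leP B A.
- apply: (linear_pair_le (e := B / A)) => //.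
  + by rewrite mulrA ler_pdivlMr.
  + by rewrite divr_ge0 ?ltW.
  + by rewrite invr_ge0 ltW.
  + rewrite -subr_ge0.
    have -> : 1 - (A / (A + 1) + (B + 1)^-1 * (B / A)) = (A - B) / ((A + 1) * (B + 1) * A).
      by field; rewrite !gt_eqF.
    by rewrite divr_ge0 ?subr_ge0 // ltW // !mulr_gt0.
  + rewrite -subr_ge0.
    have -> : 1 - (A / (A + 1) * (B / A) + (B + 1)^-1) = B * (A - B) / ((A + 1) * (B + 1)).
      by field; rewrite !gt_eqF.
    by rewrite divr_ge0 ?mulr_ge0 ?subr_ge0 // ltW // mulr_gt0.
- apply: (linear_pair_le (e := A / B)) => //.
  + by rewrite mulrA ler_pdivlMr.
  + by rewrite divr_ge0 ?ltW.
  + by rewrite invr_ge0 ltW.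
  + rewrite -subr_ge0.
    have -> : 1 - (A / (A + 1) + (B + 1)^-1 * (A / B)) =
      (B - A) * (B + A + 1) / (B * (A + 1) * (B + 1)).
      by field; rewrite !gt_eqF.
    by rewrite divr_ge0 ?mulr_ge0 ?subr_ge0 ?ltW // ?addr_gt0 // !mulr_gt0.
  + rewrite -subr_ge0.
    have -> : 1 - (A / (A + 1) * (A / B) + (B + 1)^-1) =
      (B - A) * (A * B + A + B) / (B * (A + 1) * (B + 1)).
      by field; rewrite !gt_eqF.
    by rewrite divr_ge0 ?mulr_ge0 ?subr_ge0 ?ltW // ?addr_gt0 ?mulr_gt0 // !mulr_gt0.
Qed.

Lemma expR_add_sub_lncosh (u t : R) :
  expR (u + t - lncosh t) / 2 = expR u * (expR (2 * t) / (expR (2 * t) + 1)).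
Proof.
have et_gt0 := expR_gt0 t.
rewrite /lncosh /logmeanexp expRB lnK ?posrE ?divr_gt0 ?addr_gt0 ?expR_gt0 //.
rewrite expRD expRN mulr_natl mulr2n expRD.
by field; rewrite !gt_eqF ?addr_gt0 ?invr_gt0 ?mulr_gt0.
Qed.

Lemma expR_sub_sub_lncosh (u t : R) :
  expR (u - t - lncosh t) / 2 = expR u / (expR (2 * t) + 1).
Proof.
have et_gt0 := expR_gt0 t.
rewrite /lncosh /logmeanexp expRB lnK ?posrE ?divr_gt0 ?addr_gt0 ?expR_gt0 //.
rewrite expRB expRN mulr_natl mulr2n expRD.
by field; rewrite !gt_eqF ?addr_gt0 ?invr_gt0 ?mulr_gt0.
Qed.

Lemma logmeanexp_tilt_le (u1 u2 t1 t2 P Q : R) :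
  u1 + 2 * t1 <= P -> u2 + 2 * t2 <= P -> u1 - 2 * t1 <= Q -> u2 - 2 * t2 <= Q ->
  logmeanexp (u1 + t1 - lncosh t1) (u2 - t2 - lncosh t2) <= (P + Q) / 2.
Proof.
move=> le1P le2P le1Q le2Q.
rewrite /logmeanexp -[(P + Q) / 2]expRK.
rewrite ler_ln ?posrE ?divr_gt0 ?addr_gt0 ?expR_gt0 //.
rewrite mulrDl expR_add_sub_lncosh expR_sub_sub_lncosh.
by apply: tilt_pair_le; rewrite ?expR_gt0 ?expR_ge0 // -?expRD ler_expR; lra.
Qed.

End TwoPoint.

Section TiltedSup.
Variables (R : realType) (m : nat).
Implicit Types (c : cube m -> R).

Definition tilt_sup n (th : cube m -> 'I_n -> R) c (x : cube n) : R :=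
  supcube (fun y => inner (th y) x - logLaplace (th y) + c y).

Definition lin_sup n (th : cube m -> 'I_n -> R) c (x : cube n) : R :=
  supcube (fun y => 2 * inner (th y) x + c y).

Definition tail n (th : cube m -> 'I_n.+1 -> R) : cube m -> 'I_n -> R :=
  fun y j => th y (lift ord0 j).

Definition head_offset n (th : cube m -> 'I_n.+1 -> R) c (b : bool) : cube m -> R :=
  fun y => c y + (if b then th y ord0 else - th y ord0) - lncosh (th y ord0).

Lemma tilt_sup_cons n (th : cube m -> 'I_n.+1 -> R) c b x :
  tilt_sup th c (cube_cons b x) = tilt_sup (tail th) (head_offset th c b) x.
Proof.
rewrite /tilt_sup; congr supcube; apply: funext => y.
by rewrite inner_cons /logLaplace big_ord_recl /head_offset /tail; ring.
Qed.

Lemma logmeanexp_lin_sup_cons_le n (th : cube m -> 'I_n.+1 -> R) c x :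
  logmeanexp (lin_sup (tail th) (head_offset th c true) x)
             (lin_sup (tail th) (head_offset th c false) x)
    <= (lin_sup th c (cube_cons true x) + lin_sup th c (cube_cons false x)) / 2.
Proof.
have le_cons b y : 2 * inner (tail th y) x + c y + 2 * (if b then th y ord0 else - th y ord0)
    <= lin_sup th c (cube_cons b x).
  by apply: le_trans (le_supcube _ y); rewrite /= inner_cons /tail; case: b; lra.
have [y1 ->] : exists y1, lin_sup (tail th) (head_offset th c true) x =
    2 * inner (tail th y1) x + head_offset th c true y1 := supcube_attained _.
have [y2 ->] : exists y2, lin_sup (tail th) (head_offset th c false) x =
    2 * inner (tail th y2) x + head_offset th c false y2 := supcube_attained _.
rewrite /head_offset !addrA; apply: logmeanexp_tilt_le.
- exact: le_cons true y1.
- exact: le_cons true y2.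
- by move: (le_cons false y1) => /=; lra.
- by move: (le_cons false y2) => /=; lra.
Qed.

(* The offsets c make the statement stable under conditioning on the first coordinate. *)
Lemma ln_mu_int_exp_tilt_sup_le n (th : cube m -> 'I_n -> R) c :
  ln (mu_int (fun x => expR (tilt_sup th c x))) <= mu_int (lin_sup th c).
Proof.
elim: n th c => [|n IH] th c.
  have tilt0 x : tilt_sup th c x = supcube c.
    rewrite /tilt_sup; congr supcube; apply: funext => y.
    by rewrite /inner /logLaplace !big_ord0 subr0 add0r.
  have lin0 x : lin_sup th c x = supcube c.
    rewrite /lin_sup; congr supcube; apply: funext => y.
    by rewrite /inner big_ord0 mulr0 add0r.
  by rewrite (eq_mu_int lin0) (eq_mu_int (fun x => congr1 expR (tilt0 x))) !mu_int_cst expRK.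
have expG_gt0 b : 0 < mu_int (fun x => expR (tilt_sup (tail th) (head_offset th c b) x)).
  by apply: mu_int_gt0 => x; apply: expR_gt0.
have IHexp b : mu_int (fun x => expR (tilt_sup (tail th) (head_offset th c b) x))
    <= expR (mu_int (lin_sup (tail th) (head_offset th c b))).
  by have := IH (tail th) (head_offset th c b); rewrite -ler_expR lnK // posrE.
rewrite mu_int_cons; under eq_mu_int => x do rewrite !tilt_sup_cons.
rewrite mu_intZr mu_intD.
apply: (@le_trans _ _ (logmeanexp (mu_int (lin_sup (tail th) (head_offset th c true)))
                                  (mu_int (lin_sup (tail th) (head_offset th c false))))).
  rewrite /logmeanexp ler_ln ?posrE ?divr_gt0 ?addr_gt0 ?expR_gt0 ?expG_gt0 //.
  by rewrite ler_wpM2r ?invr_ge0 // lerD.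
apply: le_trans; first exact: logmeanexp_jensen.
by rewrite [X in _ <= X]mu_int_cons; apply: ler_mu_int => x; apply: logmeanexp_lin_sup_cons_le.
Qed.

End TiltedSup.

Section EntropyIdentity.
Variable R : realType.
Implicit Types (n : nat).

Lemma I1_tanh (s : R) : I1 (tanh s) = s * tanh s - lncosh s.
Proof.
have C_gt0 : 0 < (expR s + expR (- s)) / 2 by rewrite divr_gt0 ?addr_gt0 ?expR_gt0.
have S_neq0 : expR s + expR (- s) != 0 by rewrite gt_eqF ?addr_gt0 ?expR_gt0.
have ln1D : ln (1 + tanh s) = s - lncosh s.
  have -> : 1 + tanh s = expR s * ((expR s + expR (- s)) / 2)^-1 by rewrite /tanh; field.
  by rewrite lnM ?posrE ?expR_gt0 ?invr_gt0 // lnV ?posrE // expRK.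
have ln1B : ln (1 - tanh s) = - s - lncosh s.
  have -> : 1 - tanh s = expR (- s) * ((expR s + expR (- s)) / 2)^-1 by rewrite /tanh; field.
  by rewrite lnM ?posrE ?expR_gt0 ?invr_gt0 // lnV ?posrE // expRK.
by rewrite /I1 ln1D ln1B; field.
Qed.

Lemma expR_1Btanh_half (a b : R) :
  expR a * (1 - tanh ((a - b) / 2)) = expR b * (1 + tanh ((a - b) / 2)).
Proof.
set d := (a - b) / 2.
have -> : expR a = expR b * expR d * expR d by rewrite -!expRD /d; congr expR; field.
have d_gt0 := expR_gt0 d.
rewrite /tanh expRN.
by field; rewrite !gt_eqF ?addr_gt0 ?mulr_gt0.
Qed.

Lemma setc_id n (x : cube n) i : setc x i (x i) = x.
Proof. by apply/ffunP => j; rewrite ffunE; case: eqP => [->|]. Qed.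

Lemma setc_setc n (x : cube n) i b b' : setc (setc x i b) i b' = setc x i b'.
Proof. by apply/ffunP => j; rewrite !ffunE; case: (j == i). Qed.

Lemma dpart_setc n (f : cube n -> R) i x b : dpart f i (setc x i b) = dpart f i x.
Proof. by rewrite /dpart !setc_setc. Qed.

Definition flipc n (i : 'I_n) (x : cube n) : cube n := setc x i (~~ x i).

Lemma flipcK n (i : 'I_n) : involutive (flipc i).
Proof. by move=> x; rewrite /flipc setc_setc ffunE eqxx negbK setc_id. Qed.

Lemma big_flipc_odd_eq0 n (i : 'I_n) (h : cube n -> R) :
  (forall x, h x + h (flipc i x) = 0) -> \sum_x h x = 0.
Proof.
move=> h_odd.
have sum_flipc : \sum_x h x = \sum_x h (flipc i x) by rewrite (reindex_inj (inv_inj (flipcK i))).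
have : \sum_x h x + \sum_x h x = 0.
  by rewrite {2}sum_flipc -big_split big1 // => x _; apply: h_odd.
lra.
Qed.

(* e^{f(x+)} : e^{f(x-)} = (1 + tanh d) : (1 - tanh d) for d = dpart f i x,
   so the terms at x+ and x- cancel. *)
Lemma sum_dpart_coordBtanh_eq0 n (f : cube n -> R) (i : 'I_n) :
  \sum_x expR (f x) * (dpart f i x * (Defs.coord R x i - tanh (dpart f i x))) = 0.
Proof.
set h := fun x => expR (f x) * (dpart f i x * (Defs.coord R x i - tanh (dpart f i x))).
apply: (@big_flipc_odd_eq0 n i h) => x.
have pair0 : h (setc x i true) + h (setc x i false) = 0.
  rewrite /h !dpart_setc /Defs.coord !ffunE eqxx /=.
  have := expR_1Btanh_half (f (setc x i true)) (f (setc x i false)).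
  rewrite -/(dpart f i x); set d := dpart f i x; set t := tanh d => balance.
  have -> : expR (f (setc x i true)) * (d * (1 - t)) + expR (f (setc x i false)) * (d * (-1 - t))
    = d * (expR (f (setc x i true)) * (1 - t) - expR (f (setc x i false)) * (1 + t)) by ring.
  by rewrite balance subrr mulr0.
have -> : h x = h (setc x i (x i)) by rewrite setc_id.
rewrite /flipc.
by case: (x i) pair0 => //; rewrite addrC.
Qed.

Lemma calIE n (f : cube n -> R) :
  calI f = nu_int f (fun x => inner (dgrad f x) x - logLaplace (dgrad f x)).
Proof.
rewrite /calI /nu_int /mu_int; congr (_ * _); apply/eqP; rewrite -subr_eq0 -sumrB.
have pointwise x : expR (f x) * Ient (gradLambda (dgrad f x)) -
    expR (f x) * (inner (dgrad f x) x - logLaplace (dgrad f x)) =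
    - \sum_i expR (f x) * (dpart f i x * (Defs.coord R x i - tanh (dpart f i x))).
  rewrite /Ient /gradLambda /dgrad /inner /logLaplace -sumrB -mulrBr -sumrB mulr_sumr -sumrN.
  by apply: eq_bigr => i _; rewrite I1_tanh; ring.
rewrite (eq_bigr _ (fun x _ => pointwise x)) sumrN exchange_big /=.
by rewrite big1 ?oppr0 // => i _; apply: sum_dpart_coordBtanh_eq0.
Qed.

End EntropyIdentity.

Lemma donsker_varadhan (R : realType) n (f g : cube n -> R) :
  mu_int (fun x => expR (f x)) = 1 ->
  nu_int f g <= relent f + ln (mu_int (fun x => expR (g x))).
Proof.
move=> f_norm.
set Z := mu_int (fun x => expR (g x)).
have Z_gt0 : 0 < Z by apply: mu_int_gt0 => x; apply: expR_gt0.
have pointwise x : expR (f x) * g x <=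
    expR (f x) * f x + (expR (f x) * (ln Z - 1) + expR (g x) * Z^-1).
  have := ler_wpM2l (ltW (expR_gt0 (f x))) (expR_ge1Dx (g x - f x - ln Z)).
  have -> : expR (f x) * expR (g x - f x - ln Z) = expR (g x) * Z^-1.
    rewrite !expRD !expRN lnK ?posrE //.
    by field; rewrite !gt_eqF ?expR_gt0.
  nra.
apply: le_trans (ler_mu_int pointwise) _.
by rewrite !mu_intD !mu_intZr f_norm -/Z mulfV ?gt_eqF // /relent /nu_int; lra.
Qed.

Theorem proposition2p14 (R : realType) :
  exists kappa : R, 0 < kappa /\
    forall (n : nat) (f : cube n -> R),
      mu_int (fun x => expR (f x)) = 1 ->
      calI f <= relent f + kappa * gauss_width f.
Proof.
exists 2; split=> [|n f f_norm]; first by rewrite ltr0n.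
set G := tilt_sup (dgrad f) (fun _ => 0).
have calI_le : calI f <= nu_int f G.
  rewrite calIE /nu_int; apply: ler_mu_int => x; rewrite ler_wpM2l ?expR_ge0 //.
  have := le_supcube (fun y => inner (dgrad f y) x - logLaplace (dgrad f y) + 0) x.
  by rewrite addr0.
have lin_le : mu_int (lin_sup (dgrad f) (fun _ => 0)) <= 2 * gauss_width f.
  rewrite /gauss_width -mu_intZ; apply: ler_mu_int => x.
  apply: supcube_le => y; rewrite addr0 ler_pM2l ?ltr0n //.
  exact: (le_supcube (fun y => inner (dgrad f y) x) y).
apply: le_trans calI_le _.
apply: le_trans (donsker_varadhan G f_norm) _.
by rewrite lerD2l; apply: le_trans (ln_mu_int_exp_tilt_sup_le _ _) lin_le.
Qed.
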